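(* Let $h:\mathbb{R}^n \to \mathcal{Y}$ be a model with $\mathcal{Y} = \{\pm 1\}$, let $x\sim D$, let $g_1,g_2:\mathcal{X}\times\mathcal{Y} \to G$ be two EFs, and let $\epsilon,\epsilon_0,\epsilon_1,\alpha>0$ be constants. Assume that $g_1(x,h(x))$ and $g_2(x,h(x))$ $\epsilon$-intersect and denote by $\hat{g}(x,h(x))$ their $\epsilon$-union. If $g_1$ (or $g_2$) is $\epsilon_0$-valid with respect to $h$, then $\hat{g}$ is $\epsilon_0$-valid as well. Additionally, if $g_1$ (or $g_2$) is $(\epsilon_1,\alpha)$-complete with respect to $h$, then $\hat{g}$ is also $(\epsilon_1,\alpha)$-complete.
   Context: $D$ is a distribution supported on a discrete set $\mathcal{X}\subseteq\mathbb{R}^n$; $I(\cdot;\cdot)$ is Shannon mutual information of random variables that are functions of $x\sim D$; $\ell$ is a fixed loss function on $\mathcal{Y}\times\mathcal{Y}$. A function $q$ of $(x,h(x))$ with values in a set $Q$ is $\epsilon_0$-valid with respect to $h$ if there is $t:Q\to\mathcal{Y}$ with $\mathbb{E}_x[\ell(t(q(x,h(x))),h(x))]\le\epsilon_0$. Such $q$ is $(\epsilon_1,\alpha)$-complete with respect to $h$ if for every $d$, every $\bar g:\mathcal{X}\to\mathbb{R}^d$ with $I(q(x,h(x));\bar g(x))\le\epsilon_1$, and every $s:\mathbb{R}^d\to\mathcal{Y}$, $\mathbb{E}_x[\ell(s(\bar g(x)),h(x))]\ge\alpha$. Random variables $f_1(x)\in\mathcal{X}_1$, $f_2(x)\in\mathcal{X}_2$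 $\epsilon$-intersect if there are invertible functions $r_1:\mathcal{X}_1\to\mathcal{V}_1$, $r_2:\mathcal{X}_2\to\mathcal{V}_2$ with $r_1(f_1(x))=(e_1(x),u(x))$ and $r_2(f_2(x))=(e_2(x),u(x))$, where $I(e_i(x);f_j(x))\le\epsilon$ for $i\neq j\in\{1,2\}$; $u(x)$ is the $\epsilon$-intersection and $(e_1(x),u(x),e_2(x))$ the $\epsilon$-union of $f_1(x)$ and $f_2(x)$. *)

From HB Require Import structures.
From mathcomp Require Import all_boot all_order all_algebra.
From mathcomp Require Import all_classical all_reals all_analysis.
Set Implicit Arguments. Unset Strict Implicit. Unset Printing Implicit Defensive.
Import Order.TTheory GRing.Theory Num.Theory.
Local Open Scope classical_set_scope.
Local Open Scope ring_scope.

Section Defs.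
Variable R : realType.

Definition pm1 := {y : R | (y == 1) || (y == -1)}.

Definition discrete_set (T : topologicalType) (X : set T) : Prop :=
  forall x, X x -> \forall y \near x, X y -> y = x.

Definition is_distribution (T : choiceType) (X : set T) (D : T -> R) : Prop :=
  [/\ (forall x, 0 <= D x), (forall x, ~ X x -> D x = 0)
    & (\esum_(x in [set: T]) (D x)%:E = 1)%E].

Definition pr (T : choiceType) (D : T -> R) (A : set T) : \bar R :=
  \esum_(x in A) (D x)%:E.

Definition expect (T : choiceType) (D : T -> R) (f : T -> R) : \bar R :=
  (\esum_(x in [set: T]) (D x * Num.max (f x) 0)%:E
   - \esum_(x in [set: T]) (D x * Num.max (- f x) 0)%:E)%E.

(* pointwise term of KL(p || q) written with nonnegative summands:
   p ln(p/q) - p + q  (with 0 ln 0 = 0) *)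
Definition klterm (p q : R) : R :=
  if p == 0 then q else p * ln (p / q) - p + q.

(* Shannon mutual information (in nats) I(f(x); g(x)) of two random
   variables that are functions of x ~ D, i.e. KL(P_{f,g} || P_f x P_g). *)
Definition mutinfo (T A B : choiceType) (D : T -> R) (f : T -> A) (g : T -> B)
  : \bar R :=
  \esum_(ab in [set: A * B])
    (klterm (fine (pr D [set x | f x = ab.1 /\ g x = ab.2]))
            (fine (pr D [set x | f x = ab.1]) * fine (pr D [set x | g x = ab.2])))%:E.

Variable (T : choiceType) (D : T -> R) (ell : pm1 -> pm1 -> R) (h : T -> pm1).

Definition valid (Q : Type) (q : T -> pm1 -> Q) (eps0 : R) : Prop :=
  exists t : Q -> pm1,
    (expect D (fun x => ell (t (q x (h x))) (h x)) <= eps0%:E)%E.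

Definition complete (Q : choiceType) (q : T -> pm1 -> Q) (eps1 alpha : R) : Prop :=
  forall (d : nat) (gbar : T -> 'rV[R]_d) (s : 'rV[R]_d -> pm1),
    (mutinfo D (fun x => q x (h x)) gbar <= eps1%:E)%E ->
    (alpha%:E <= expect D (fun x => ell (s (gbar x)) (h x)))%E.

(* f1(x), f2(x) eps-intersect, with eps-intersection u(x) and
   eps-union (e1(x), u(x), e2(x)); the defining identities are required
   for every x in the support set X. *)
Definition eps_intersect (X : set T) (X1 X2 E1 E2 U : choiceType)
  (f1 : T -> X1) (f2 : T -> X2) (eps : R)
  (e1 : T -> E1) (u : T -> U) (e2 : T -> E2) : Prop :=
  exists (r1 : X1 -> E1 * U) (r2 : X2 -> E2 * U),
    [/\ bijective r1, bijective r2,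
        (forall x, X x -> r1 (f1 x) = (e1 x, u x)),
        (forall x, X x -> r2 (f2 x) = (e2 x, u x))
      & ((mutinfo D e1 f2 <= eps%:E) /\ (mutinfo D e2 f1 <= eps%:E))%E].

End Defs.

From HB Require Import structures.
From mathcomp Require Import all_boot all_order all_algebra.
From mathcomp Require Import all_classical all_reals all_analysis.
From mathcomp Require Import ring lra.
Import Order.TTheory GRing.Theory Num.Theory numFieldNormedType.Exports.

(* On the support of [D], each [g_i x (h x)] is a function of the eps-union:
   apply the inverse of [r_i] to [(e_i x, u x)].  Validity passes to the union
   by composing the decoder with that function.  Completeness passes because
   mutual information cannot increase under post-processing, so
   [I(g_i; gbar) <= I(ghat; gbar)].  This data-processing inequality holds
   fibre by fibre by the log-sum inequality, obtained by summing the tangent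
   bounds [p ln r + q (1 - r) <= klterm p q] at the slope [r] given by the
   ratio of the fibre totals. *)

Set Implicit Arguments.
Unset Strict Implicit.
Unset Printing Implicit Defensive.

Local Open Scope classical_set_scope.
Local Open Scope ring_scope.

Section KLTerm.
Variable R : realType.
Implicit Types p q r : R.

(* This is [ln y <= y - 1] at [y = q r / p]; equality holds at [r = p / q]. *)
Lemma klterm_tangent p q r : 0 <= p -> 0 <= q -> 0 <= r ->
  (0 < p -> 0 < q /\ 0 < r) -> p * ln r + q * (1 - r) <= klterm p q.
Proof.
move=> p0 q0 r0 qr_gt0; rewrite /klterm.
have [->|p_neq0] := eqVneq p 0; first by rewrite mul0r add0r; nra.
have p_gt0 : 0 < p by rewrite lt_def p_neq0.
have [q_gt0 r_gt0] := qr_gt0 p_gt0.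
pose y := q * r / p.
have y_gt0 : 0 < y by rewrite !(mulr_gt0, invr_gt0).
have ln_y : ln y <= y - 1.
  by have := @le_ln1Dx R (y - 1); rewrite addrCA subrr addr0; apply; lra.
have py : p * y = q * r by rewrite /y mulrCA mulfV ?mulr1 // gt_eqF.
have lnyE : ln y = ln q + ln r - ln p by rewrite ln_div ?lnM ?posrE ?mulr_gt0.
have lnpqE : ln (p / q) = ln p - ln q by rewrite ln_div ?posrE.
have : p * ln y <= p * (y - 1) by rewrite ler_wpM2l.
rewrite lnyE lnpqE; nra.
Qed.

Lemma klterm_ge0 p q : 0 <= p -> 0 <= q -> (0 < p -> 0 < q) -> 0 <= klterm p q.
Proof.
move=> p0 q0 q_gt0; have := @klterm_tangent p q 1 p0 q0 ler01.
by rewrite ln1 mulr0 add0r subrr mulr0; apply=> /q_gt0.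
Qed.

End KLTerm.

Section ESum.
Variables (R : realType) (C : choiceType).
Local Open Scope ereal_scope.

Lemma esumZl (S : set C) (r : R) (a : C -> \bar R) :
  (0 <= r)%R -> (forall c, 0 <= a c) ->
  \esum_(c in S) (r%:E * a c) = r%:E * \esum_(c in S) a c.
Proof.
move=> r0 a0; rewrite /esum -ereal_supZl //; last first.
  by apply/set0P; exists 0, set0; [exact: fsets_set0 | rewrite fsbig_set0].
congr ereal_sup; apply/seteqP; split=> y /=.
  by move=> [A SA <-]; exists (\sum_(x \in A) a x); [exists A | rewrite ge0_mule_fsumr].
by move=> [z [A SA <-] <-]; exists A => //; rewrite ge0_mule_fsumr.
Qed.

Lemma esum_scaled_le (S : set C) (p q k : C -> R) (P Q a b : R) :
  (0 <= a)%R -> (0 <= b)%R ->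
  (forall c, 0 <= p c)%R -> (forall c, 0 <= q c)%R -> (forall c, S c -> 0 <= k c)%R ->
  \esum_(c in S) (p c)%:E = P%:E -> \esum_(c in S) (q c)%:E = Q%:E ->
  (forall c, S c -> a * p c <= k c + b * q c)%R ->
  (a * P)%:E <= \esum_(c in S) (k c)%:E + (b * Q)%:E.
Proof.
move=> a0 b0 p0 q0 k0 sumP sumQ le_apkbq.
rewrite !EFinM -sumP -sumQ -!esumZl // -esumD.
- by apply: le_esum => c Sc; rewrite -!EFinM -EFinD lee_fin le_apkbq.
- by move=> c Sc; rewrite lee_fin k0.
- by move=> c _; rewrite -EFinM lee_fin mulr_ge0.
Qed.

Lemma klterm_le_esum (S : set C) (p q : C -> R) (P Q : R) :
  (forall c, 0 <= p c)%R -> (forall c, 0 <= q c)%R ->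
  (forall c, S c -> 0 < p c -> 0 < q c)%R ->
  \esum_(c in S) (p c)%:E = P%:E -> \esum_(c in S) (q c)%:E = Q%:E ->
  (0 < P -> 0 < Q)%R ->
  (klterm P Q)%:E <= \esum_(c in S) (klterm (p c) (q c))%:E.
Proof.
move=> p0 q0 pq sumP sumQ PQ.
have P0 : (0 <= P)%R by rewrite -lee_fin -sumP esum_ge0 // => c _; rewrite lee_fin.
have Q0 : (0 <= Q)%R by rewrite -lee_fin -sumQ esum_ge0 // => c _; rewrite lee_fin.
have le_pP c : S c -> (p c <= P)%R.
  move=> Sc; rewrite -lee_fin -sumP; apply: esum_ge; exists [set c].
    by split; [exact: finite_set1 | move=> _ ->].
  by rewrite fsbig_set1.
pose r := (P / Q)%R.
have r0 : (0 <= r)%R by rewrite divr_ge0.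
have klPQ : klterm P Q = (ln r * P - (r - 1) * Q)%R.
  rewrite /klterm /r; have [->|P_neq0] := eqVneq P 0%R; first by rewrite !mul0r; ring.
  by field; rewrite gt_eqF // PQ // lt_def P_neq0.
have tangent c : S c -> (p c * ln r + q c * (1 - r) <= klterm (p c) (q c))%R.
  move=> Sc; apply: klterm_tangent => // pc_gt0.
  have P_gt0 := lt_le_trans pc_gt0 (le_pP c Sc).
  by split; [exact: pq | rewrite divr_gt0 // PQ].
have kl0 c : S c -> (0 <= klterm (p c) (q c))%R.
  by move=> Sc; rewrite klterm_ge0 // => /(pq c Sc).
rewrite klPQ; have [r_ge1|r_lt1] := lerP 1 r.
- rewrite EFinB leeBlDr //.
  apply: (@esum_scaled_le S p q) => //; rewrite ?ln_ge0 ?subr_ge0 // => c /tangent.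
  lra.
- rewrite (_ : ln r * P - (r - 1) * Q = (1 - r) * Q - (- ln r) * P)%R; last by ring.
  rewrite EFinB leeBlDr //.
  apply: (@esum_scaled_le S q p) => //; rewrite ?subr_ge0 ?oppr_ge0 ?ln_le0 ?ltW //.
  move=> c /tangent; lra.
Qed.

End ESum.

Section Distribution.
Variables (R : realType) (T : choiceType) (X : set T) (D : T -> R).
Hypotheses (D_ge0 : forall x, 0 <= D x) (D_supp : forall x, ~ X x -> D x = 0)
  (D_sum1 : (\esum_(x in [set: T]) (D x)%:E = 1)%E).
Local Open Scope ereal_scope.

Lemma pr_ge0 (A : set T) : 0 <= pr D A.
Proof. by apply: esum_ge0 => x _; rewrite lee_fin. Qed.

Lemma pr_le1 (A : set T) : pr D A <= 1.
Proof.
rewrite /pr esum_mkcond -D_sum1; apply: le_esum => x _.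
by case: ifP => _ //; rewrite lee_fin.
Qed.

Lemma pr_fin_num (A : set T) : pr D A \is a fin_num.
Proof. by rewrite ge0_fin_numE ?pr_ge0 // (le_lt_trans (pr_le1 A)) // ltry. Qed.

Lemma fine_prK (A : set T) : (fine (pr D A))%:E = pr D A.
Proof. exact/fineK/pr_fin_num. Qed.

Lemma fine_pr_ge0 (A : set T) : (0 <= fine (pr D A))%R.
Proof. exact/fine_ge0/pr_ge0. Qed.

Lemma le_fine_pr (A B : set T) : A `<=` B -> (fine (pr D A) <= fine (pr D B))%R.
Proof.
move=> AB; rewrite -lee_fin !fine_prK /pr esum_mkcond [leRHS]esum_mkcond.
apply: le_esum => x _; case: ifPn => [/set_mem/AB/mem_set -> //|_].
by case: ifP => _ //; rewrite lee_fin.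
Qed.

Lemma pr_eq_on (A B : set T) : (forall x, X x -> A x <-> B x) -> pr D A = pr D B.
Proof.
move=> AB; rewrite /pr esum_mkcond [RHS]esum_mkcond; apply: eq_esum => x _.
have [Xx|nXx] := pselect (X x); last by rewrite D_supp //; case: ifP; case: ifP.
by rewrite (_ : (x \in A) = (x \in B)) //; apply/idP/idP; rewrite !inE => /(AB x Xx).
Qed.

Lemma pr_fiber_sum (C A : choiceType) (F : T -> C) (phi : C -> A) (a : A) (E : set T) :
  pr D ((phi \o F) @^-1` [set a] `&` E) =
  \esum_(c in phi @^-1` [set a]) pr D (F @^-1` [set c] `&` E).
Proof.
rewrite /pr esum_esum; last by move=> *; rewrite lee_fin.
apply: (@reindex_esum _ _ _ _ _ snd); split.
- by move=> [c x] /= [<- [-> Ex]].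
- move=> [c1 x1] [c2 x2]; rewrite !inE /= => -[_ [F1 _]] [_ [F2 _]] /= x12.
  by rewrite -F1 -F2 x12.
- by move=> x /= [<- Ex]; exists (F x, x).
Qed.

Lemma expect_eq_on (f g : T -> R) : (forall x, X x -> f x = g x) ->
  expect D f = expect D g.
Proof.
move=> fg; rewrite /expect; congr (_ - _); apply: eq_esum => x _;
  by have [/fg ->|/D_supp ->] := pselect (X x); rewrite ?mul0r.
Qed.

Lemma fine_pr_prod_gt0 (A B : choiceType) (f : T -> A) (g : T -> B) a b :
  (0 < fine (pr D [set x | f x = a /\ g x = b]))%R ->
  (0 < fine (pr D [set x | f x = a]) * fine (pr D [set x | g x = b]))%R.
Proof.
by move=> j_gt0; apply: mulr_gt0; apply: lt_le_trans j_gt0 _; apply: le_fine_pr => x [].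
Qed.

Lemma mutinfo_le_comp (C A B : choiceType) (F : T -> C) (phi : C -> A)
    (f : T -> A) (g : T -> B) :
  (forall x, X x -> f x = phi (F x)) -> mutinfo D f g <= mutinfo D F g.
Proof.
move=> fE.
pose joint (c : C) (b : B) := fine (pr D (F @^-1` [set c] `&` g @^-1` [set b])).
pose prod (c : C) (b : B) :=
  (fine (pr D (F @^-1` [set c])) * fine (pr D (g @^-1` [set b])))%R.
have kl_ge0 c b : (0 <= klterm (joint c b) (prod c b))%R.
  by rewrite klterm_ge0 ?mulr_ge0 ?fine_pr_ge0 //; apply: fine_pr_prod_gt0.
have -> : mutinfo D F g = \esum_(ab in [set: A * B])
    \esum_(c in phi @^-1` [set ab.1]) (klterm (joint c ab.2) (prod c ab.2))%:E.
  rewrite esum_esum; last by move=> *; rewrite lee_fin.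
  apply: (@reindex_esum _ _ _ _ _ (fun k => (k.2, k.1.2))); split => //.
  - by move=> [[a1 b1] c1] [[a2 b2] c2]; rewrite !inE /= => -[_ <-] [_ <-] [-> ->].
  - by move=> [c b] _; exists ((phi c, b), c).
apply: le_esum => -[a b] _ /=; apply: klterm_le_esum => //.
- by move=> c; exact: fine_pr_ge0.
- by move=> c; rewrite mulr_ge0 ?fine_pr_ge0.
- by move=> c _; exact: fine_pr_prod_gt0.
- under eq_esum do rewrite fine_prK.
  by rewrite -pr_fiber_sum fine_prK; apply: pr_eq_on => x /fE /= ->.
- under eq_esum do rewrite EFinM fine_prK muleC.
  rewrite esumZl ?fine_pr_ge0 //; last by move=> c; exact: pr_ge0.
  have := pr_fiber_sum F phi a setT; under eq_esum do rewrite setIT.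
  rewrite setIT => <-; rewrite -(fine_prK ((phi \o F) @^-1` _)) -EFinM mulrC.
  by congr (_ * _)%R%:E; congr fine; apply: pr_eq_on => x /fE /= ->.
- exact: fine_pr_prod_gt0.
Qed.

End Distribution.

Section Transfer.
Variables (R : realType) (T : choiceType) (X : set T) (D : T -> R).
Variables (ell : pm1 R -> pm1 R -> R) (h : T -> pm1 R).
Hypotheses (D_ge0 : forall x, 0 <= D x) (D_supp : forall x, ~ X x -> D x = 0)
  (D_sum1 : (\esum_(x in [set: T]) (D x)%:E = 1)%E).

Lemma valid_comp (Q Q' : Type) (q : T -> pm1 R -> Q) (q' : T -> pm1 R -> Q')
    (phi : Q' -> Q) (eps0 : R) :
  (forall x, X x -> q x (h x) = phi (q' x (h x))) ->
  valid D ell h q eps0 -> valid D ell h q' eps0.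
Proof.
move=> qE [t t_le]; exists (t \o phi).
rewrite (expect_eq_on D_supp (g := fun x => ell (t (q x (h x))) (h x))) //.
by move=> x /qE /= ->.
Qed.

Lemma complete_comp (Q Q' : choiceType) (q : T -> pm1 R -> Q) (q' : T -> pm1 R -> Q')
    (phi : Q' -> Q) (eps1 alpha : R) :
  (forall x, X x -> q x (h x) = phi (q' x (h x))) ->
  complete D ell h q eps1 alpha -> complete D ell h q' eps1 alpha.
Proof.
move=> qE q_complete d gbar s I_le; apply: q_complete; apply: le_trans I_le.
exact: (mutinfo_le_comp (f := fun x => q x (h x)) (F := fun x => q' x (h x))
  D_ge0 D_supp D_sum1 gbar qE).
Qed.

End Transfer.

Lemma eps_union_factor (R : realType) (T : choiceType) (D : T -> R) (X : set T)
    (X1 X2 E1 E2 U : choiceType) (f1 : T -> X1) (f2 : T -> X2) (eps : R)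
    (e1 : T -> E1) (u : T -> U) (e2 : T -> E2) :
  eps_intersect D X f1 f2 eps e1 u e2 ->
  (exists phi1 : E1 * U * E2 -> X1, forall x, X x -> f1 x = phi1 (e1 x, u x, e2 x)) /\
  (exists phi2 : E1 * U * E2 -> X2, forall x, X x -> f2 x = phi2 (e1 x, u x, e2 x)).
Proof.
move=> [r1 [r2 [[r1V r1K _] [r2V r2K _] r1E r2E _]]]; split.
- by exists (fun k => r1V (k.1.1, k.1.2)) => x Xx; rewrite -r1E.
- by exists (fun k => r2V (k.2, k.1.2)) => x Xx; rewrite -r2E.
Qed.

Theorem lemma1 (R : realType) (n : nat) (X : set 'rV[R]_n) (D : 'rV[R]_n -> R)
  (ell : pm1 R -> pm1 R -> R) (h : 'rV[R]_n -> pm1 R)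
  (G : choiceType) (g1 g2 : 'rV[R]_n -> pm1 R -> G)
  (eps eps0 eps1 alpha : R)
  (E1 E2 U : choiceType) (e1 : 'rV[R]_n -> E1) (u : 'rV[R]_n -> U)
  (e2 : 'rV[R]_n -> E2) :
  @discrete_set ('rV[R]_n : topologicalType) X -> is_distribution X D ->
  0 < eps -> 0 < eps0 -> 0 < eps1 -> 0 < alpha ->
  eps_intersect D X (fun x => g1 x (h x)) (fun x => g2 x (h x)) eps e1 u e2 ->
  let ghat := fun (x : 'rV[R]_n) (_ : pm1 R) => (e1 x, u x, e2 x) in
  ((valid D ell h g1 eps0 \/ valid D ell h g2 eps0) ->
     valid D ell h ghat eps0) /\
  ((complete D ell h g1 eps1 alpha \/ complete D ell h g2 eps1 alpha) ->
     complete D ell h ghat eps1 alpha).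
Proof.
move=> _ [D_ge0 D_supp D_sum1] _ _ _ _ /eps_union_factor[[phi1 g1E] [phi2 g2E]] ghat.
split; case.
- exact: (valid_comp (q' := ghat) D_supp g1E).
- exact: (valid_comp (q' := ghat) D_supp g2E).
- exact: (complete_comp (q' := ghat) D_ge0 D_supp D_sum1 g1E).
- exact: (complete_comp (q' := ghat) D_ge0 D_supp D_sum1 g2E).
Qed.
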